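(* For each $i\in\{1,2,3,4\}$, the minimal polynomial of $\mathcal{M}_i^{-1}\mathcal{A}$ has degree at most $n+q+1$.
   Context: Let $A_1\in\mathbb{R}^{p\times n}$ have full column rank and $A_2\in\mathbb{R}^{q\times n}$. Set $P=A_1^TA_1$, and let $\hat P\in\mathbb{R}^{n\times n}$ be symmetric positive definite. Define $\mathcal{A}=\begin{pmatrix}I_p&A_1&0\\0&P&A_2^T\\0&A_2&I_q\end{pmatrix}$, $\mathcal{M}_1=\begin{pmatrix}I_p&0&0\\0&\hat P&0\\0&0&I_q\end{pmatrix}$, $\mathcal{M}_2=\begin{pmatrix}I_p&0&0\\0&\hat P&A_2^T\\0&0&I_q\end{pmatrix}$, $\mathcal{M}_3=\begin{pmatrix}I_p&A_1&0\\0&\hat P&0\\0&0&I_q\end{pmatrix}$, $\mathcal{M}_4=\begin{pmatrix}I_p&A_1&0\\0&\hat P&A_2^T\\0&0&I_q\end{pmatrix}$. *)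

From HB Require Import structures.
From mathcomp Require Import all_boot all_order all_algebra.
Set Implicit Arguments. Unset Strict Implicit. Unset Printing Implicit Defensive.
Import Order.TTheory GRing.Theory Num.Theory.
Local Open Scope ring_scope.

(* Minimal polynomial of a square matrix of arbitrary size N.  MathComp's
   [mxminpoly] needs a size of the form N'.+1; the (empty) 0x0 matrix has
   minimal polynomial 1. *)
Definition mxminpolyN (F : fieldType) (N : nat) : 'M[F]_N -> {poly F} :=
  match N return 'M[F]_N -> {poly F} with
  | 0 => fun _ => 1
  | N'.+1 => fun A => mxminpoly A
  end.

Definition block3 (R : Type) (p n q : nat)
  (B11 : 'M[R]_(p, p)) (B12 : 'M[R]_(p, n)) (B13 : 'M[R]_(p, q))
  (B21 : 'M[R]_(n, p)) (B22 : 'M[R]_(n, n)) (B23 : 'M[R]_(n, q))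
  (B31 : 'M[R]_(q, p)) (B32 : 'M[R]_(q, n)) (B33 : 'M[R]_(q, q))
  : 'M[R]_(p + (n + q)) :=
  block_mx B11 (row_mx B12 B13) (col_mx B21 B31) (block_mx B22 B23 B32 B33).

Section Mats.
Variables (R : realFieldType) (p n q : nat).
Variables (A1 : 'M[R]_(p, n)) (A2 : 'M[R]_(q, n)) (Ph : 'M[R]_n).

Definition PP : 'M[R]_n := A1^T *m A1.

Definition calA : 'M[R]_(p + (n + q)) := @block3 R p n q 1%:M A1 0 0 PP A2^T 0 A2 1%:M.
Definition calM1 : 'M[R]_(p + (n + q)) := @block3 R p n q 1%:M 0 0 0 Ph 0 0 0 (1%:M : 'M[R]_q).
Definition calM2 : 'M[R]_(p + (n + q)) := @block3 R p n q 1%:M 0 0 0 Ph A2^T 0 0 (1%:M : 'M[R]_q).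
Definition calM3 : 'M[R]_(p + (n + q)) := @block3 R p n q 1%:M A1 0 0 Ph 0 0 0 (1%:M : 'M[R]_q).
Definition calM4 : 'M[R]_(p + (n + q)) := @block3 R p n q 1%:M A1 0 0 Ph A2^T 0 0 (1%:M : 'M[R]_q).
End Mats.

Definition spd (R : realFieldType) (n : nat) (M : 'M[R]_n) : Prop :=
  M^T = M /\ forall x : 'cV[R]_n, x != 0 -> 0 < (x^T *m M *m x) 0 0.

From HB Require Import structures.
From mathcomp Require Import all_boot all_order all_algebra.
Set Implicit Arguments. Unset Strict Implicit. Unset Printing Implicit Defensive.
Import Order.TTheory GRing.Theory Num.Theory.
Local Open Scope ring_scope.

(* Each M_i, hence M_i^-1 and M_i^-1 A, has the block form [[I, X], [0, B]]
   with B of size n + q.  So M_i^-1 A - I has rank at most n + q, and a matrix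
   T with T - a = U V, U of width k, is annihilated by (X - a) char_poly(V U + a):
   indeed V T = (V U + a) V, whence (T - a) f(T) = U f(V U + a) V for every f. *)

Section HornerMxN.
Variable F : fieldType.

(* Unlike [horner_mx], defined for square matrices of any size, including 0. *)
Definition horner_mxN N (T : 'M[F]_N) (r : {poly F}) : 'M[F]_N :=
  \sum_(i < size r) r`_i *: T ^+ i.

Lemma horner_mxNE N (T : 'M[F]_N.+1) r : horner_mxN T r = horner_mx T r.
Proof.
rewrite -[in RHS](coefK r) poly_def rmorph_sum; apply: eq_bigr => i _.
by rewrite -mul_polyC rmorphM rmorphXn /= horner_mx_C horner_mx_X -mulmxE mul_scalar_mx.
Qed.

Lemma horner_mxNM N (T : 'M[F]_N) r s :
  horner_mxN T (r * s) = horner_mxN T r *m horner_mxN T s.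
Proof.
case: N T => [|N] T; first by apply/matrixP => -[].
by rewrite !horner_mxNE rmorphM mulmxE.
Qed.

Lemma horner_mxN_XsubC N (T : 'M[F]_N) a : horner_mxN T ('X - a%:P) = T - a%:M.
Proof.
case: N T => [|N] T; first by apply/matrixP => -[].
by rewrite horner_mxNE rmorphB /= horner_mx_X horner_mx_C.
Qed.

Lemma horner_mxN_char_poly N (T : 'M[F]_N) : horner_mxN T (char_poly T) = 0.
Proof.
case: N T => [|N] T; first by apply/matrixP => -[].
by rewrite horner_mxNE Cayley_Hamilton.
Qed.

Lemma size_mxminpolyN_le N (T : 'M[F]_N) r :
  r != 0 -> horner_mxN T r = 0 -> (size (mxminpolyN T) <= size r)%N.
Proof.
case: N T => [|N] T r_neq0; first by rewrite size_poly1 size_poly_gt0.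
by rewrite horner_mxNE => /mxminpoly_min/dvdp_leq; apply.
Qed.

Lemma horner_mxN_intertwine m N (U : 'M[F]_(m, N)) (S : 'M[F]_m) (T : 'M[F]_N) r :
  U *m T = S *m U -> U *m horner_mxN T r = horner_mxN S r *m U.
Proof.
move=> UT; have UTX i : U *m T ^+ i = S ^+ i *m U.
  elim: i => [|i IH]; first by rewrite !expr0 mulmx1 mul1mx.
  by rewrite !exprSr -!mulmxE mulmxA IH -mulmxA UT mulmxA.
rewrite mulmx_sumr mulmx_suml; apply: eq_bigr => i _.
by rewrite -scalemxAr -scalemxAl UTX.
Qed.

Lemma size_mxminpolyN_factor N k (T : 'M[F]_N) a (U : 'M[F]_(N, k)) (V : 'M[F]_(k, N)) :
  T - a%:M = U *m V -> ((size (mxminpolyN T)).-1 <= k.+1)%N.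
Proof.
move=> defT; set S := a%:M + V *m U.
have VT : V *m T = S *m V.
  by rewrite -[T](subrK a%:M) defT mulmxDr mulmxDl mulmxA scalar_mxC addrC.
set P := ('X - a%:P) * char_poly S.
have sizeP : size P = k.+2.
  by rewrite size_monicM ?monicXsubC ?char_poly_monic ?size_XsubC ?size_char_poly
    -?size_poly_eq0 ?size_char_poly.
have /size_mxminpolyN_le : horner_mxN T P = 0.
  rewrite horner_mxNM horner_mxN_XsubC defT -mulmxA (horner_mxN_intertwine _ VT).
  by rewrite horner_mxN_char_poly mul0mx mulmx0.
by rewrite -size_poly_eq0 sizeP => /(_ isT); case: size.
Qed.

Lemma size_mxminpolyN_rank N (T : 'M[F]_N) a :
  ((size (mxminpolyN T)).-1 <= (\rank (T - a%:M)%R).+1)%N.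
Proof. exact: size_mxminpolyN_factor (esym (mulmx_base _)). Qed.

End HornerMxN.

Section Block1.
Variables (F : fieldType) (p k : nat).

Definition block1_mx (X : 'M[F]_(p, k)) (B : 'M[F]_k) : 'M[F]_(p + k) :=
  block_mx 1%:M X 0 B.

Lemma block1_mxM X B X' B' :
  block1_mx X B *m block1_mx X' B' = block1_mx (X' + X *m B') (B *m B').
Proof.
by rewrite /block1_mx mulmx_block !mul1mx !mul0mx !mulmx0 !addr0 !add0r.
Qed.

Lemma invmx_block1_mx X B : exists X' B', invmx (block1_mx X B) = block1_mx X' B'.
Proof.
have unitE : (block1_mx X B \in unitmx) = (B \in unitmx).
  by rewrite !unitmxE /block1_mx det_ublock det1 mul1r.
have [B_unit|B_nonunit] := boolP (B \in unitmx); last first.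
  by exists X, B; apply: invmx_out; rewrite inE unitE.
exists (- (X *m invmx B)), (invmx B).
have : block1_mx X B *m block1_mx (- (X *m invmx B)) (invmx B) = 1%:M.
  by rewrite block1_mxM mulmxV // addrC subrr /block1_mx -scalar_mx_block.
by move/(congr1 (mulmx (invmx (block1_mx X B)))); rewrite mulmx1 mulKmx ?unitE.
Qed.

Lemma rank_block1_mx_sub1 X B : (\rank (block1_mx X B - 1%:M)%R <= k)%N.
Proof.
have -> : block1_mx X B - 1%:M = col_mx X (B - 1%:M) *m row_mx 0 1%:M.
  rewrite mul_col_row !mulmx0 !mulmx1 /block1_mx (scalar_mx_block p k).
  by rewrite opp_block_mx add_block_mx subrr !oppr0 !addr0.
exact: leq_trans (mxrankM_maxr _ _) (rank_leq_row _).
Qed.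

End Block1.

Theorem theorem6 (R : realFieldType) (p n q : nat)
  (A1 : 'M[R]_(p, n)) (A2 : 'M[R]_(q, n)) (Ph : 'M[R]_n) :
  \rank A1 = n -> spd Ph ->
  forall M, M \in [:: @calM1 R p n q Ph; @calM2 R p n q A2 Ph; @calM3 R p n q A1 Ph; @calM4 R p n q A1 A2 Ph] ->
    ((size (mxminpolyN (invmx M *m @calA R p n q A1 A2))).-1 <= n + q + 1)%N.
Proof.
move=> _ _ M M_in.
have [X [B ->]] : exists X B, M = block1_mx X B.
  move: M_in; rewrite !inE /calM1 /calM2 /calM3 /calM4 /block3 !col_mx0.
  by case/or4P => /eqP ->; do 2 eexists.
have [X' [B' ->]] := invmx_block1_mx X B.
have -> : calA A1 A2 = block1_mx (row_mx A1 0) (block_mx (PP A1) A2^T A2 1%:M).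
  by rewrite /calA /block3 col_mx0.
rewrite block1_mxM addn1; apply: leq_trans (size_mxminpolyN_rank _ 1) _.
by rewrite ltnS rank_block1_mx_sub1.
Qed.
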